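(* Assume $f$ has a unique global maximizer $g$ and the problem contains no weak epistasis. Then for every $v\in V$, the assignment $\{(\mathcal{IN}^*(v),g)\}=\{(u,g[u]):u\in\mathcal{IN}^*(v)\}$ is a stationary optimum.
   Context: Fix $\ell\ge1$, loci $V=\{0,\dots,\ell-1\}$, chromosomes $\vec y\in\{0,1\}^V$, fitness $f:\{0,1\}^V\to\mathbb R$ (maximized) with unique global maximizer $g$. An assignment $A$ is a set of pairs $(v,a)$ ($v\in V$, $a\in\{0,1\}$) with at most one pair per locus; $A[v]=a$ if $(v,a)\in A$, else $A[v]=*$; coverage $\mathcal C(A)=\{v:A[v]\ne*\}$; for $S\subseteq V$, $\{(S,g)\}=\{(s,g[s]):s\in S\}$. $\Psi_A$ (constrained optima) is the set of chromosomes agreeing with $A$ on $\mathcal C(A)$ with maximum fitness among such chromosomes; $\Psi_A[v]=\{\psi_v:\psi\in\Psi_A\}$. For full assignments $B$, $f(B)$ is the fitness of the corresponding chromosome. Epistasis: for $v\in V$ and nonempty $S\subseteq V\setminus\{v\}$, $S\Rightarrow v$ iff for every $s\in S$ there exists an assignment $A$ with $\mathcal C(A)=S$ and $\Psi_A[v]\neq\Psi_{A\setminus\{(s,A[s])\}}[v]$; the empty set is never epistatic. An epistasis $S\Rightarrow v$ with $|S|\ge2$ is weak if no nonempty proper subset $T\subsetneq S$ has $T\Rightarrow v$; ''no weak epistasis'' means no epistasis is weak. The epistatic graph (EG) is the directed graph on $V$ with an edge $u\to v$ iff $\{u\}\Rightarrow v$. $\mathcal{IN}^0(v)=\{v\}$,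 $\mathcal{IN}^i(v)=\{u:\exists w\in\mathcal{IN}^{i-1}(v),\ \{u\}\Rightarrow w\}$ for $i\ge1$, and $\mathcal{IN}^*(v)=\bigcup_{i=0}^{\ell-1}\mathcal{IN}^i(v)$ (the in-closure of $v$: $v$ together with all vertices having a directed path to $v$ in the EG). A stationary optimum is a nonempty assignment $A$ such that for every assignment $A'\neq A$ with $\mathcal C(A')=\mathcal C(A)$ and every assignment $R$ with $\mathcal C(R)=V\setminus\mathcal C(A)$, $f(A\cup R)>f(A'\cup R)$. *)

(* Loci V = 'I_l, chromosomes = {ffun 'I_l -> bool},
   fitness values in an arbitrary real domain R (only the order is used). *)
From mathcomp Require Import all_boot all_order all_algebra.
Set Implicit Arguments. Unset Strict Implicit. Unset Printing Implicit Defensive.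
Import Order.TTheory GRing.Theory Num.Theory.
Local Open Scope ring_scope.

Section Epistasis.
Variable l : nat.
Variable R : realDomainType.

Definition chrom := {ffun 'I_l -> bool}.
(* An assignment: A v = Some a iff (v,a) \in A ; None means A[v] = * *)
Definition assignment := {ffun 'I_l -> option bool}.

Variable f : chrom -> R.

Definition coverage (A : assignment) : {set 'I_l} := [set v | A v != None].

Definition agrees (A : assignment) (x : chrom) : bool :=
  [forall v, if A v is Some a then x v == a else true].

Definition Psi (A : assignment) : {set chrom} :=
  [set x | agrees A x && [forall y, agrees A y ==> (f y <= f x)]].

Definition PsiAt (A : assignment) (v : 'I_l) : {set bool} :=
  [set (x : chrom) v | x in Psi A].

Definition remove (A : assignment) (s : 'I_l) : assignment :=
  [ffun u => if u == s then None else A u].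

Definition epistatic (S : {set 'I_l}) (v : 'I_l) : bool :=
  [&& S != set0, v \notin S &
   [forall s in S, exists A : assignment,
      (coverage A == S) && (PsiAt A v != PsiAt (remove A s) v)]].

Definition weak_epistasis (S : {set 'I_l}) (v : 'I_l) : bool :=
  [&& 2 <= #|S|, epistatic S v &
   ~~ [exists T : {set 'I_l}, [&& T != set0, T \proper S & epistatic T v]]]%N.

Definition no_weak_epistasis : Prop :=
  forall (S : {set 'I_l}) (v : 'I_l), ~~ weak_epistasis S v.

Fixpoint IN (i : nat) (v : 'I_l) : {set 'I_l} :=
  match i with
  | 0 => [set v]
  | i'.+1 => [set u | [exists w in IN i' v, epistatic [set u] w]]
  end.

Definition INstar (v : 'I_l) : {set 'I_l} :=
  \bigcup_(i < l) IN i v.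

Definition assign_of (S : {set 'I_l}) (g : chrom) : assignment :=
  [ffun u => if u \in S then Some (g u) else None].

(* the chromosome of the full assignment A ∪ R (A and R with disjoint
   coverages whose union is V; the default value is never used then) *)
Definition union_chrom (A Rr : assignment) : chrom :=
  [ffun u => match A u with
             | Some a => a
             | None => if Rr u is Some b then b else false
             end].

Definition stationary_optimum (A : assignment) : Prop :=
  coverage A != set0 /\
  forall A' Rr : assignment,
    A' != A -> coverage A' = coverage A ->
    coverage Rr = ~: coverage A ->
    f (union_chrom A' Rr) < f (union_chrom A Rr).

Definition unique_global_max (g : chrom) : Prop :=
  forall x : chrom, x != g -> f x < f g.

End Epistasis.

(* Let S = IN*(v). Since S is closed under single-locus epistatic predecessors
   and, without weak epistasis, every epistatic set contains an epistatic
   singleton, no set of loci outside S is epistatic to any w in S. Fixing the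
   loci outside S one at a time therefore never changes the constrained
   optimum at w, which stays g[w]. So for every R covering V \ S the unique
   constrained optimum is {(S,g)} u R, and any other A' u R is strictly worse. *)
From mathcomp Require Import all_boot all_order all_algebra.
Set Implicit Arguments. Unset Strict Implicit. Unset Printing Implicit Defensive.
Import Order.TTheory GRing.Theory Num.Theory.
Local Open Scope ring_scope.

Section Constrained.
Variables (l : nat) (R : realDomainType) (f : chrom l -> R).

Definition assign0 : assignment l := [ffun => None].

Lemma coverage_eq0 (B : assignment l) : coverage B = set0 -> B = assign0.
Proof.
move=> B0; apply/ffunP=> u; rewrite ffunE; apply/eqP; apply: contraT => Bu.
by have := in_set0 u; rewrite -B0 inE Bu.
Qed.

Lemma coverage_remove (B : assignment l) s : coverage (remove B s) = coverage B :\ s.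
Proof. by apply/setP=> u; rewrite !inE ffunE; case: (u == s). Qed.

Lemma coverage_assign_of (S : {set 'I_l}) (g : chrom l) : coverage (assign_of S g) = S.
Proof. by apply/setP=> u; rewrite !inE ffunE; case: (u \in S). Qed.

Lemma PsiAt_unconstrained (B : assignment l) w :
  w \notin coverage B ->
  (forall T : {set 'I_l}, T \subset coverage B -> ~~ epistatic f T w) ->
  PsiAt f B w = PsiAt f assign0 w.
Proof.
have [n] := ubnP #|coverage B|; elim: n B => // n IH B ltBn wB noepi.
have [B0|Bn0] := eqVneq (coverage B) set0; first by rewrite (coverage_eq0 B0).
have := noepi _ (subxx _); rewrite /epistatic Bn0 wB /=.
case/forall_inPn=> s sB /existsPn/(_ B); rewrite eqxx negbK => /eqP->.
apply: IH; rewrite coverage_remove.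
- by rewrite (cardsD1 s) sB in ltBn.
- by rewrite inE negb_and wB orbT.
- by move=> T sT; apply: noepi (subset_trans sT (subsetDl _ _)).
Qed.

Lemma Psi_assign0 (g : chrom l) : unique_global_max f g -> Psi f assign0 = [set g].
Proof.
move=> gmax; have agrees0 y : agrees assign0 y by apply/forallP=> u; rewrite ffunE.
apply/setP=> x; rewrite !inE agrees0 /=; have [->|xg] := eqVneq x g.
  by apply/forall_inP=> y _; have [->//|/gmax/ltW] := eqVneq y g.
by apply/forall_inPn; exists g; [exact: agrees0 | rewrite -ltNge gmax].
Qed.

Lemma Psi_set1_lt (B : assignment l) x0 x :
  Psi f B = [set x0] -> agrees B x -> x != x0 -> f x < f x0.
Proof.
move=> PsiB agx; apply: contra_neqT; rewrite -leNgt => le_x0x.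
have /setP/(_ x0) := PsiB; rewrite !inE eqxx => /andP[_ /forall_inP x0max].
have : x \in Psi f B.
  by rewrite inE agx; apply/forall_inP=> y /x0max/le_trans; apply.
by rewrite PsiB inE => /eqP.
Qed.

Lemma Psi_neq0 (B : assignment l) x : agrees B x -> Psi f B != set0.
Proof.
move=> agx; case: (arg_maxP f agx) => m agm mmax.
by apply/set0Pn; exists m; rewrite inE agm; apply/forall_inP.
Qed.

Lemma agrees_union_chrom (A Rr : assignment l) :
  coverage Rr = ~: coverage A -> agrees Rr (union_chrom A Rr).
Proof.
move=> covR; apply/forallP=> u; case eR: (Rr u) => [b|] //.
have : u \in coverage Rr by rewrite inE eR.
by rewrite covR !inE negbK ffunE => /eqP->; rewrite eR.
Qed.

Lemma union_chrom_inj (A A' Rr : assignment l) :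
  coverage A' = coverage A -> union_chrom A' Rr = union_chrom A Rr -> A' = A.
Proof.
move=> covA' eqU; apply/ffunP=> u.
have : (u \in coverage A') = (u \in coverage A) by rewrite covA'.
rewrite !inE.
have /ffunP/(_ u) := eqU; rewrite !ffunE.
by case: (A' u) (A u) => [a|] [b|] // ->.
Qed.

Lemma Psi_outside (S : {set 'I_l}) (g : chrom l) (Rr : assignment l) :
  coverage Rr = ~: S -> (forall w, w \in S -> PsiAt f Rr w = [set g w]) ->
  Psi f Rr = [set union_chrom (assign_of S g) Rr].
Proof.
move=> covR PsiS; set x0 := union_chrom _ _.
have agx0 : agrees Rr x0 by apply: agrees_union_chrom; rewrite coverage_assign_of.
suff PsiR : Psi f Rr \subset [set x0].
  apply/eqP; rewrite eqEsubset PsiR sub1set.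
  by have /set0Pn[y yP] := Psi_neq0 agx0; have /set1P <- := subsetP PsiR _ yP.
apply/subsetP=> y yP; rewrite inE; apply/eqP/ffunP=> u.
rewrite !ffunE; case: ifP => uS.
  have : y u \in PsiAt f Rr u by apply/imsetP; exists y.
  by rewrite PsiS // inE => /eqP.
have : u \in coverage Rr by rewrite covR inE uS.
rewrite inE; case eR: (Rr u) => [b|] // _.
by move: yP; rewrite inE => /andP[/forallP/(_ u)]; rewrite eR => /eqP.
Qed.

End Constrained.

Section Closure.
Variables (l : nat) (R : realDomainType) (f : chrom l -> R).

Lemma epistatic_singleton_sub (T : {set 'I_l}) w :
  no_weak_epistasis f -> epistatic f T w ->
  exists2 u, u \in T & epistatic f [set u] w.
Proof.
(* A minimal epistatic subset of T cannot be weak, so it is a singleton. *)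
move=> nowk eT; have [M minM sMT] := @minset_exists _ (epistatic f ^~ w) _ eT.
have [eM Mmin] := minsetP minM.
have /and3P[M0 _ _] := eM.
suff /cards1P[u Mu] : #|M| == 1%N.
  by exists u; [rewrite (subsetP sMT) // Mu set11 | rewrite -Mu].
rewrite eqn_leq card_gt0 M0 andbT leqNgt; apply: contra (nowk M w) => M2.
rewrite /weak_epistasis M2 eM; apply/existsPn=> N; apply/and3P=> [[_ pNM eN]].
by have /eqP := proper_neq pNM; rewrite (Mmin _ eN (proper_sub pNM)).
Qed.

Definition pred_step (X : {set 'I_l}) : {set 'I_l} :=
  [set u | [exists w in X, epistatic f [set u] w]].

Lemma pred_step_mono : {homo pred_step : X Y / X \subset Y}.
Proof.
move=> X Y sXY; apply/subsetP=> u; rewrite !inE => /exists_inP[w wX e].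
by apply/exists_inP; exists w; rewrite ?(subsetP sXY).
Qed.

Lemma pred_step_bigcup n (X : 'I_n -> {set 'I_l}) :
  pred_step (\bigcup_(i < n) X i) = \bigcup_(i < n) pred_step (X i).
Proof.
apply/setP=> u; rewrite inE; apply/exists_inP/bigcupP.
  by case=> w /bigcupP[i _ wX] e; exists i; rewrite // inE; apply/exists_inP; exists w.
by case=> i _; rewrite inE => /exists_inP[w wX e]; exists w => //; apply/bigcupP; exists i.
Qed.

Definition closure_step v (X : {set 'I_l}) : {set 'I_l} := [set v] :|: pred_step X.

Lemma iter_closure_step v k :
  iter k (closure_step v) set0 = \bigcup_(i < k) IN f i v.
Proof.
elim: k => [|k IH]; first by rewrite big_ord0.
by rewrite iterS IH big_ord_recl /closure_step pred_step_bigcup.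
Qed.

Lemma INstar_fixset v : INstar f v = fixset (closure_step v).
Proof. by rewrite /fixset card_ord iter_closure_step. Qed.

Lemma INstar_closed v u w :
  w \in INstar f v -> epistatic f [set u] w -> u \in INstar f v.
Proof.
have step_mono : {homo closure_step v : X Y / X \subset Y}.
  by move=> X Y sXY; apply: setUS; apply: pred_step_mono.
rewrite !INstar_fixset => wS e; rewrite -(fixsetK step_mono) !inE orbC.
by apply/orP; left; apply/exists_inP; exists w.
Qed.

End Closure.

Theorem lemma1 (l : nat) (R : realDomainType) (f : chrom l -> R) (g : chrom l) :
  (0 < l)%N ->
  unique_global_max f g ->
  no_weak_epistasis f ->
  forall v : 'I_l, stationary_optimum f (assign_of (INstar f v) g).
Proof.
move=> l_gt0 gmax nowk v; set S := INstar f v.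
split.
  rewrite coverage_assign_of; apply/set0Pn; exists v.
  by apply/bigcupP; exists (Ordinal l_gt0); rewrite ?inE.
move=> A' Rr neqA covA' covR; rewrite coverage_assign_of in covA' covR.
have PsiS w : w \in S -> PsiAt f Rr w = [set g w].
  move=> wS; rewrite PsiAt_unconstrained ?covR ?inE ?negbK //.
    by rewrite /PsiAt (Psi_assign0 gmax) imset_set1.
  move=> T sT; apply/negP=> /(epistatic_singleton_sub nowk)[u uT eu].
  by have := subsetP sT u uT; rewrite inE (INstar_closed wS eu).
apply: (Psi_set1_lt (Psi_outside covR PsiS)).
  by apply: agrees_union_chrom; rewrite covA'.
by apply: contra neqA => /eqP/union_chrom_inj->; rewrite ?coverage_assign_of.
Qed.
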